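(* Let $n\ge3$, let $\overrightarrow{C_n}$ be an oriented cycle and $D$ a distance set of $\overrightarrow{C_n}$ with $\min(D)=1$. If $\overrightarrow{C_n}$ is $D$-antimagic, then $\overrightarrow{C_n}$ is either unidirectional or $\Theta$-oriented.
   Context: An oriented graph is a simple graph each of whose edges is given one direction (an arc $(u,v)$ goes from $u$ to $v$). For vertices $u,v$, $d(u,v)$ is the length of a shortest directed path from $u$ to $v$ ($d(u,u)=0$, $\infty$ if no path). A distance set of an oriented graph is a nonempty set $D$ of nonnegative integers each of which is a finite distance $d(u,v)$ for some pair of vertices. $N_D(v)=\{y : d(v,y)\in D\}$; for a bijection $f:V\to\{1,\dots,|V|\}$, $\omega_D(v)=\sum_{x\in N_D(v)}f(x)$ (empty sum $0$); $f$ is $D$-antimagic if distinct vertices have distinct $D$-weights, and the graph is $D$-antimagic if such an $f$ exists. A source is a vertex of in-degree $0$, a sink a vertex of out-degree $0$. An oriented cycle $\overrightarrow{C_n}$ is an orientation of the cycle on $v_1,\dots,v_n$. It is unidirectional if (up to relabeling) its arcs are $(v_i,v_{i+1})$, $1\le i\le n-1$, and $(v_n,v_1)$. It is $\Theta$-oriented if it has exactly one source and exactly one sink and these are adjacent; up to relabeling its arcs are $(v_i,v_{i+1})$, $1\le i\le n-1$, and $(v_1,v_n)$. *)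

From mathcomp Require Import all_boot.
Set Implicit Arguments. Unset Strict Implicit. Unset Printing Implicit Defensive.

Section Digraph.
Variables (T : finType) (arc : rel T).

Fixpoint walkb (k : nat) (u v : T) : bool :=
  if k is k'.+1 then [exists w, arc u w && walkb k' w v] else u == v.

Definition distb (u v : T) (k : nat) : bool :=
  walkb k u v && [forall j : 'I_k, ~~ walkb j u v].

Definition distance_set (D : pred nat) : Prop :=
  (exists k, D k) /\ (forall k, D k -> exists u v, distb u v k).

(* N_D(v); finite distances are always < |V|, so k ranges over 'I_#|T| *)
Definition NbD (D : pred nat) (v : T) : {set T} :=
  [set y | [exists k : 'I_#|T|, D k && distb v y k]].

Definition weightD (D : pred nat) (f : T -> nat) (v : T) : nat :=
  \sum_(y in NbD D v) f y.

Definition labeling (f : T -> nat) : Prop :=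
  injective f /\ (forall x, 1 <= f x <= #|T|).

Definition D_antimagic (D : pred nat) : Prop :=
  exists f : T -> nat, labeling f /\ injective (weightD D f).

Definition is_source (v : T) : bool := [forall w, ~~ arc w v].
Definition is_sink (v : T) : bool := [forall w, ~~ arc v w].

Definition unidirectional : Prop :=
  exists g : T -> 'I_#|T|, bijective g /\
    forall u v, arc u v = (val (g v) == (val (g u)).+1 %% #|T|).

Definition theta_oriented : Prop :=
  exists s t, [/\ is_source s, is_sink t,
    (forall s', is_source s' -> s' = s),
    (forall t', is_sink t' -> t' = t) & (arc s t || arc t s)].

End Digraph.

(* Oriented cycle on vertices 'I_n: edge {i, i+1 mod n} is oriented
   i -> i+1 if o i, and i+1 -> i otherwise. Every oriented cycle is
   isomorphic to one of these. *)
Definition cycle_arc (n : nat) (o : 'I_n -> bool) : rel 'I_n :=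
  fun u v => [exists i : 'I_n,
    (o i && (u == i) && (val v == i.+1 %% n)) ||
    (~~ o i && (val u == i.+1 %% n) && (v == i))].

(** Since [min D >= 1], a sink has an empty [D]-neighbourhood, hence weight
    [0], so an antimagic cycle has at most one sink; sinks and sources
    alternate around a cycle, so there are as many sources.  Without a sink
    all arcs point the same way.  With a sink [t], the unique source is a
    neighbour of [t]: otherwise both neighbours of [t] have [t] as only
    out-neighbour, so, as [1 \in D], both have [D]-neighbourhood [{t}] and the
    same weight. *)

From mathcomp Require Import all_boot zify.
Set Implicit Arguments. Unset Strict Implicit. Unset Printing Implicit Defensive.

Section Digraph.
Variables (T : finType) (arc : rel T) (D : pred nat).
Hypothesis D_gt0 : forall k, D k -> 0 < k.

Lemma walkbS_sink t k y : is_sink arc t -> walkb arc k.+1 t y = false.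
Proof.
move=> /forallP t_sink /=; apply/existsP=> [[w /andP[tw _]]].
by have := t_sink w; rewrite tw.
Qed.

Lemma NbD_sink t : is_sink arc t -> NbD arc D t = set0.
Proof.
move=> t_sink; apply/setP=> y; rewrite !inE.
apply/existsP=> [[k /andP[/D_gt0 k_gt0 /andP[walk_k _]]]].
by move: k_gt0 walk_k; case: (nat_of_ord k) => // k' _; rewrite walkbS_sink.
Qed.

Lemma NbD_sole_out_sink a t :
  D 1 -> is_sink arc t -> (forall w, arc a w = (w == t)) -> NbD arc D a = [set t].
Proof.
move=> D1 t_sink a_out; apply/setP=> y; rewrite !inE.
apply/existsP/eqP=> [[k /andP[/D_gt0 k_gt0 /andP[walk_k _]]] | ->].
  move: k_gt0 walk_k; case: (nat_of_ord k) => // -[|j] _ /existsP[w].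
    by rewrite a_out => /andP[/eqP -> /eqP].
  rewrite a_out => /andP[/eqP -> walk_t].
  by move: (walkbS_sink j y t_sink); rewrite /= walk_t.
have a_neq_t : a != t.
  apply/eqP=> eq_at; move: t_sink; rewrite -eq_at => /forallP/(_ a).
  by rewrite a_out eq_at eqxx.
have card_gt1 : 1 < #|T| by apply/card_gt1P; exists a, t.
exists (Ordinal card_gt1); rewrite /= D1 /distb /=; apply/andP; split.
  by apply/existsP; exists t; rewrite a_out !eqxx.
by apply/forallP=> j; rewrite (ord1 j).
Qed.

Section Antimagic.
Hypotheses (D1 : D 1) (antimagic : D_antimagic arc D).

Lemma antimagic_sink_unique t1 t2 : is_sink arc t1 -> is_sink arc t2 -> t1 = t2.
Proof.
case: antimagic => f [_ weight_inj] t1_sink t2_sink; apply: weight_inj.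
by rewrite /weightD !NbD_sink // !big_set0.
Qed.

Lemma antimagic_sole_out_sink_unique a b t : is_sink arc t ->
  (forall w, arc a w = (w == t)) -> (forall w, arc b w = (w == t)) -> a = b.
Proof.
case: antimagic => f [_ weight_inj] t_sink a_out b_out; apply: weight_inj.
by rewrite /weightD !(NbD_sole_out_sink D1 t_sink) // !big_set1.
Qed.

End Antimagic.
End Digraph.

Section OrientedCycle.
Variables (n : nat) (o : 'I_n -> bool).
Local Notation arc := (cycle_arc o).

Lemma cycle_arcE u v : arc u v =
  (o u && (v == ordS u)) || (~~ o (ord_pred u) && (v == ord_pred u)).
Proof.
apply/existsP/orP=> [[i /orP[/andP[/andP[oi /eqP ->] vi]|/andP[/andP[oi ui] /eqP ->]]]|].
- by left; rewrite oi /=; apply/eqP/val_inj; apply/eqP.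
- have -> : u = ordS i by apply/val_inj/eqP.
  by right; rewrite ordSK oi eqxx.
case=> /andP[ou /eqP ->]; first by exists u; rewrite ou !eqxx.
exists (ord_pred u); rewrite ou eqxx /= -[X in val X == _](ord_predK u) eqxx.
by rewrite orbT.
Qed.

Lemma cycle_sinkE v : is_sink arc v = ~~ o v && o (ord_pred v).
Proof.
apply/forallP/andP=> [v_sink | [ov opv] w]; last first.
  by rewrite cycle_arcE (negbTE ov) opv.
split; first by apply/negP=> ov; have := v_sink (ordS v); rewrite cycle_arcE ov eqxx.
apply/negPn/negP=> opv.
by have := v_sink (ord_pred v); rewrite cycle_arcE opv eqxx orbT.
Qed.

Lemma cycle_sourceE v : is_source arc v = o v && ~~ o (ord_pred v).
Proof.
apply/forallP/andP=> [v_source | [ov opv] w].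
  split; last by apply/negP=> opv; have := v_source (ord_pred v);
    rewrite cycle_arcE opv ord_predK eqxx.
  apply/negPn/negP=> ov.
  by have := v_source (ordS v); rewrite cycle_arcE ordSK ov eqxx orbT.
rewrite cycle_arcE; apply/negP=> /orP[/andP[ow /eqP vE]|/andP[ow /eqP vE]].
  by move: opv; rewrite vE ordSK ow.
by move: ov; rewrite vE (negbTE ow).
Qed.

(* Pointwise [o i + (i is a sink) = o (ord_pred i) + (i is a source)]; sum
   over [i] and reindex along [ord_pred]. *)
Lemma card_sinks_sources :
  #|[set v | is_sink arc v]| = #|[set v | is_source arc v]|.
Proof.
rewrite -!sum1dep_card [LHS]big_mkcond [RHS]big_mkcond /=.
apply: (@addnI (\sum_i (o i : nat))).
rewrite [X in _ = X + _](reindex_inj (@ord_pred_inj n)) -!big_split /=.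
by apply: eq_bigr => i _; rewrite cycle_sinkE cycle_sourceE; case: (o i); case: (o _).
Qed.

Lemma cycle_orientation_const (n_gt0 : 0 < n) :
  (forall i, o (ord_pred i) = o i) -> forall i, o i = o (Ordinal n_gt0).
Proof.
move=> o_pred [k lt_kn]; elim: k lt_kn => [|k IHk] lt_kn; first by congr (o _); apply: val_inj.
rewrite -(IHk (ltnW lt_kn)) -o_pred; congr (o _); apply: val_inj => /=.
by rewrite modnDr modn_small // ltnW.
Qed.

Lemma rev_ordS (u : 'I_n) : rev_ord (ordS u) = ord_pred (rev_ord u).
Proof.
apply: val_inj => /=; have := ltn_ord u; case: (ltnP u.+1 n) => [lt_un | ge_un] u_lt.
  rewrite modn_small // (_ : (n - u.+1 + n).-1 = n - u.+2 + n); last lia.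
  by rewrite modnDr modn_small; lia.
by rewrite (_ : u.+1 = n) ?modnn ?subnn ?add0n ?modn_small; lia.
Qed.

Lemma unidirectional_const_orientation b :
  (forall i, o i = b) -> unidirectional arc.
Proof.
move=> oE; have card_n : #|'I_n| = n by rewrite card_ord.
case: b oE => oE.
  exists (cast_ord (esym card_n)); split.
    by exists (cast_ord card_n) => x; apply: val_inj.
  by move=> u v; rewrite cycle_arcE !oE /= orbF card_n.
exists (cast_ord (esym card_n) \o @rev_ord n); split.
  by exists (@rev_ord n \o cast_ord card_n) => x /=;
    rewrite ?cast_ordKV ?rev_ordK ?cast_ordK.
move=> u v; have ordS_rev : ordS (rev_ord u) = rev_ord (ord_pred u).
  by rewrite -[X in ordS (rev_ord X)]ord_predK rev_ordS ord_predK.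
by rewrite cycle_arcE !oE /= card_n -(inj_eq rev_ord_inj) -ordS_rev -val_eqE.
Qed.

Lemma ord_pred_neq_ordS (t : 'I_n) : 3 <= n -> ord_pred t != ordS t.
Proof.
move=> n_ge3; apply/eqP=> /(congr1 (@ordS n)); rewrite ord_predK => /(congr1 val) /=.
have := ltn_ord t; case: (ltnP t.+1 n) => [lt_tn | ge_tn] t_lt.
  rewrite (modn_small lt_tn); case: (ltnP t.+2 n) => [lt2 | ge2].
    by rewrite modn_small //; lia.
  by rewrite (_ : t.+2 = n) ?modnn; lia.
by rewrite (_ : t.+1 = n) ?modnn ?modn_small; lia.
Qed.

Section Sink.
Variable t : 'I_n.
Hypothesis t_sink : is_sink arc t.

Lemma arc_to_sink : arc (ord_pred t) t && arc (ordS t) t.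
Proof.
move: t_sink; rewrite cycle_sinkE => /andP[ot opt].
by rewrite !cycle_arcE ord_predK opt ordSK ot !eqxx orbT.
Qed.

Lemma sink_pred_sole_out : ~~ is_source arc (ord_pred t) ->
  forall w, arc (ord_pred t) w = (w == t).
Proof.
move: t_sink; rewrite cycle_sinkE cycle_sourceE => /andP[_ opt].
by rewrite opt /= => /negbNE oppt w; rewrite cycle_arcE opt oppt ord_predK orbF.
Qed.

Lemma sink_succ_sole_out : ~~ is_source arc (ordS t) ->
  forall w, arc (ordS t) w = (w == t).
Proof.
move: t_sink; rewrite cycle_sinkE cycle_sourceE ordSK => /andP[ot _].
by rewrite ot andbT => ost w; rewrite cycle_arcE (negbTE ost) ordSK ot.
Qed.

End Sink.

Lemma unidirectional_no_sink : 0 < n ->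
  (forall v, ~~ is_sink arc v) -> unidirectional arc.
Proof.
move=> n_gt0 no_sink.
have /card0_eq no_source : #|[set v | is_source arc v]| = 0.
  by rewrite -card_sinks_sources; apply: eq_card0 => v; rewrite inE (negbTE (no_sink v)).
apply: (unidirectional_const_orientation (cycle_orientation_const n_gt0 _)) => i.
have := no_sink i; have := no_source i; rewrite !inE /= cycle_sinkE cycle_sourceE.
by case: (o i); case: (o _).
Qed.

Lemma theta_oriented_unique_sink t : 3 <= n -> is_sink arc t ->
  (forall t', is_sink arc t' -> t' = t) ->
  (forall a b, (forall w, arc a w = (w == t)) -> (forall w, arc b w = (w == t)) -> a = b) ->
  theta_oriented arc.
Proof.
move=> n_ge3 t_sink sink_uniq sole_out_uniq.
have /mem_card1 [s sE] : #|[set v | is_source arc v]| = 1.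
  rewrite -card_sinks_sources; apply: (eq_card1 (x := t)) => v.
  by rewrite inE; apply/idP/eqP=> [/sink_uniq | ->].
have source_uniq s' : is_source arc s' -> s' = s.
  by move=> s'_source; apply/eqP; move: (sE s'); rewrite !inE s'_source.
have {sE} s_source : is_source arc s by move: (sE s); rewrite !inE eqxx.
exists s, t; split=> //.
have /andP[pred_t succ_t] := arc_to_sink t_sink.
case: (boolP (is_source arc (ord_pred t))) => [/source_uniq <- | pred_ns].
  by rewrite pred_t.
case: (boolP (is_source arc (ordS t))) => [/source_uniq <- | succ_ns].
  by rewrite succ_t.
case/eqP: (ord_pred_neq_ordS t n_ge3); apply: sole_out_uniq.
  exact: sink_pred_sole_out.
exact: sink_succ_sole_out.
Qed.

End OrientedCycle.

Theorem mainTheorem5 (n : nat) (o : 'I_n -> bool) (D : pred nat) :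
  3 <= n ->
  distance_set (cycle_arc o) D ->
  D 1 -> (forall k, D k -> 1 <= k) ->
  D_antimagic (cycle_arc o) D ->
  unidirectional (cycle_arc o) \/ theta_oriented (cycle_arc o).
Proof.
move=> n_ge3 _ D1 D_gt0 antimagic.
case: (pickP [pred v | is_sink (cycle_arc o) v]) => [t /= t_sink | no_sink].
  right; apply: (theta_oriented_unique_sink n_ge3 t_sink).
    by move=> t' t'_sink; apply: (antimagic_sink_unique D_gt0 antimagic).
  by move=> a b; apply: (antimagic_sole_out_sink_unique D_gt0 D1 antimagic t_sink).
left; apply: unidirectional_no_sink; first exact: leq_trans n_ge3.
by move=> v; apply/negbT/no_sink.
Qed.
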